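(* Let $H$ be a binary tree based graph, $M$ a pseudomatching of $H$, $S$ a set of literals with $Vars(S)=V(H)\setminus\bigcup M$ that is $1$-comfortable w.r.t. $M$, and $\varphi\in{\bf CNF}(M)$. Then $\Pr({\bf ES}(\varphi)\mid{\bf EC}(S))=(2/3)^{|M|}$.
   Context: Sets of literals never contain a variable together with its negation; $Vars(S)$ is the set of variables occurring in $S$. A rooted tree is extended if none of its leaves has a sibling. A graph $H$ is a binary tree based graph if it is the edge-disjoint union of extended rooted trees $T_1,\dots,T_m$ with roots $t_1,\dots,t_m$ such that every leaf of some $T_i$ is a leaf of exactly two of the trees, and any two trees have at most one common vertex, which is a leaf of both. Vertices are root vertices, leaf vertices, and internal vertices (the rest); two internal vertices are siblings if they are siblings in the tree containing them. $T_i,T_j$ are adjacent if they share a leaf $\ell_{i,j}$; $P_{i,j}$ is the path between $t_i$ and $t_j$ in $T_i\cup T_j$; $P^{1/2}_{i\to j}$ is the path in $T_i$ from $t_i$ to $\ell_{i,j}$. A pseudoedge is a pair $\{t_i,t_j\}$ with $T_i,T_j$ adjacent; a pseudomatching is a set of pairwise disjoint pseudoedges; $\bigcup M$ is the set of their ends. $\phi_H$ is the CNF on variables $V(H)$ with a clause $C_{i,j}$ (positive literals of $V(P_{i,j})$) for each pseudoedge. ${\bf CNF}(M)$ is the set of CNFs consisting, for each $\{t_i,t_j\}\in M$, of one clause that is either the disjunction of positive literals of $V(P^{1/2}_{i\to j})$ or of $V(P^{1/2}_{j\to i})$. $S$ falsifies a clause if all its variables occur negatively in $S$. $S$ respects $\{t_i,t_j\}$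 if all non-root variables of $C_{i,j}$ occur negatively in $S$ and the siblings of all internal variables of $C_{i,j}$ occur positively in $S$. $S$ is $1$-comfortable w.r.t. $M$ if it falsifies no clause of $\phi_H$ and respects every pseudoedge of $M$. The positive literal $\ell_{i,j}$ is fixed w.r.t. $S'$ if $\ell_{i,j}\in S'$ and all other variables of $C_{i,j}$ occur negatively in $S'$; $Fix(S')$ is the set of fixed literals. ${\bf SAT}(H)$ is the set of satisfying assignments of $\phi_H$; each $S'\in{\bf SAT}(H)$ has probability $(1/2)^{|V(H)\setminus Fix(S')|}$. ${\bf EC}(S)=\{S'\in{\bf SAT}(H):S\subseteq S'\}$; ${\bf ES}(\varphi)=\{S'\in{\bf SAT}(H): S'\text{ satisfies }\varphi\}$. *)

From mathcomp Require Import all_boot all_order all_algebra.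
Set Implicit Arguments. Unset Strict Implicit. Unset Printing Implicit Defensive.
Import GRing.Theory Num.Theory.

(* A family of m rooted trees on the vertex type V.  Tree i has vertex set
   VT i, root rt i, and parent function par i (the root is its own parent). *)
Record tree_family (V : finType) (m : nat) := TreeFamily {
  VT : 'I_m -> {set V};
  rt : 'I_m -> V;
  par : 'I_m -> V -> V }.

Section Defs.
Variables (V : finType) (m : nat) (F : tree_family V m).

Definition childb (i : 'I_m) (u v : V) : bool :=
  [&& u \in VT F i, u != rt F i & par F i u == v].

Definition leafb (i : 'I_m) (v : V) : bool :=
  [&& v \in VT F i, v != rt F i & [forall u, ~~ childb i u v]].

Definition sibb (i : 'I_m) (u w : V) : bool :=
  [&& u \in VT F i, w \in VT F i, u != rt F i, w != rt F i, u != w &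
      par F i u == par F i w].

Definition rooted_tree (i : 'I_m) : Prop :=
  [/\ rt F i \in VT F i, par F i (rt F i) = rt F i,
      (forall v, v \in VT F i -> par F i v \in VT F i) &
      (forall v, v \in VT F i -> exists k, iter k (par F i) v = rt F i)].

Definition extended (i : 'I_m) : Prop :=
  forall v w, leafb i v -> ~~ sibb i v w.

Definition is_btbg : Prop :=
  [/\ (forall i, rooted_tree i), (forall i, extended i),
      (forall v : V, exists i, v \in VT F i),
      (forall i v, leafb i v -> #|[set j | leafb j v]| = 2) &
      (forall i j, i != j ->
         #|VT F i :&: VT F j| <= 1 /\
         (forall v, v \in VT F i :&: VT F j -> leafb i v && leafb j v))].

Definition isroot (v : V) : bool := [exists k, v == rt F k].
Definition isleaf (v : V) : bool := [exists k, leafb k v].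
Definition internal (v : V) : bool := ~~ isroot v && ~~ isleaf v.
Definition siblings (u w : V) : bool := [exists i, sibb i u w].

Definition adj (i j : 'I_m) : bool :=
  (i != j) && [exists v, leafb i v && leafb j v].
Definition ell (i j : 'I_m) : V :=
  odflt (rt F i) [pick v | leafb i v && leafb j v].

Definition anc (i : 'I_m) (v : V) : {set V} :=
  [set iter k (par F i) v | k : 'I_#|V|].

Definition half (i j : 'I_m) : {set V} := anc i (ell i j).
(* V(P_{i,j}) = variables of the clause C_{i,j} *)
Definition Cl (i j : 'I_m) : {set V} := half i j :|: half j i.

(* pseudoedges are represented by the 2-sets {i,j} of tree indices
   (equivalently the root pairs {t_i,t_j}; roots are distinct) *)
Definition pseudoedge (e : {set 'I_m}) : bool :=
  [exists i, exists j, (e == [set i; j]) && adj i j].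
Definition pseudomatching (M : {set {set 'I_m}}) : Prop :=
  (forall e, e \in M -> pseudoedge e) /\
  (forall e1 e2, e1 \in M -> e2 \in M -> e1 != e2 -> [disjoint e1 & e2]).
Definition rootsM (M : {set {set 'I_m}}) : {set V} :=
  [set rt F i | i in \bigcup_(e in M) e].

(* partial assignments = consistent sets of literals;
   S v = Some true : positive literal v in S; Some false: negative literal *)
Definition pasg := {ffun V -> option bool}.
Definition Vars (S : pasg) : {set V} := [set v | S v != None].

Definition falsifies (S : pasg) (C : {set V}) : bool :=
  [forall v in C, S v == Some false].

Definition respects (S : pasg) (i j : 'I_m) : bool :=
  [forall v in Cl i j, ~~ isroot v ==> (S v == Some false)] &&
  [forall v in Cl i j, internal v ==> [forall w, siblings v w ==> (S w == Some true)]].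

Definition comfortable1 (M : {set {set 'I_m}}) (S : pasg) : Prop :=
  (forall i j, adj i j -> ~~ falsifies S (Cl i j)) /\
  (forall e i j, e \in M -> e = [set i; j] -> respects S i j).

Definition asg := {ffun V -> bool}.
Definition satC (A : asg) (C : {set V}) : bool := [exists v in C, A v].
Definition SAT : {set asg} :=
  [set A : asg | [forall i, forall j, adj i j ==> satC A (Cl i j)]].

Definition Fix (A : asg) : {set V} :=
  [set v | [exists i, exists j, [&& adj i j, v == ell i j, A v &
       [forall u in Cl i j, (u != v) ==> ~~ A u]]]].

Definition prob (A : asg) : rat := (2%:R^-1) ^+ #|~: Fix A|.
Definition Pr (X : {set asg}) : rat := \sum_(A in X) prob A.
Definition CondPr (X Y : {set asg}) : rat := Pr (X :&: Y) / Pr Y.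

Definition EC (S : pasg) : {set asg} :=
  [set A in SAT | [forall v, (S v == None) || (S v == Some (A v))]].

(* a CNF of CNF(M) is given by a choice ph : for e = {i,j} in M,
   ph e = (i,j) selects the clause V(P^{1/2}_{i->j}) *)
Definition cnf_of (M : {set {set 'I_m}}) (ph : {set 'I_m} -> 'I_m * 'I_m) : Prop :=
  forall e, e \in M -> e = [set (ph e).1; (ph e).2].
Definition ES (M : {set {set 'I_m}}) (ph : {set 'I_m} -> 'I_m * 'I_m) : {set asg} :=
  [set A in SAT | [forall e in M, satC A (half (ph e).1 (ph e).2)]].

End Defs.

From Pilot Require Import Defs.
From mathcomp Require Import all_boot all_order all_algebra.
Import GRing.Theory Num.Theory.
Set Implicit Arguments. Unset Strict Implicit. Unset Printing Implicit Defensive.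

(* An assignment A in EC(S) agrees with S off the 2|M| roots of M.  Respect
   of a matched pseudoedge {t_i, t_j} sets every non-root variable of C_{i,j}
   false, so C_{i,j} reduces to t_i \/ t_j and P^{1/2}_{i->j} to t_i.
   Conversely, once t_i \/ t_j holds for every matched pair, all of phi_H is
   satisfied: if t_i is matched to t_c <> t_j, the paths of T_i to l_{i,c}
   and to l_{i,j} split at an internal vertex of C_{i,c}, whose child on the
   side of l_{i,j} lies on C_{i,j} and is set true by S; if neither tree is
   matched, C_{i,j} is fully assigned by S and not falsified.  So EC(S)
   corresponds to the 3^|M| choices of nonzero root values per matched pair,
   and ES(phi) /\ EC(S) to the 2^|M| choices making the root selected by phi
   true.  Finally, a clause with a fixed literal contains no root of M, so
   Fix, hence the probability, is constant on EC(S). *)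

Section TreeFamily.
Variables (V : finType) (m : nat) (F : tree_family V m).
Hypothesis btbgF : is_btbg F.

Local Notation VT := (VT F).
Local Notation rt := (rt F).
Local Notation par := (par F).
Local Notation leafb := (leafb F).
Local Notation sibb := (sibb F).
Local Notation anc := (anc F).

Lemma btbg_rooted i : rooted_tree F i.
Proof. by case: btbgF. Qed.

Lemma rt_in_VT i : rt i \in VT i.
Proof. by case: (btbg_rooted i). Qed.

Lemma par_rt i : par i (rt i) = rt i.
Proof. by case: (btbg_rooted i). Qed.

Lemma par_in_VT i v : v \in VT i -> par i v \in VT i.
Proof. by case: (btbg_rooted i) => _ _ + _; apply. Qed.

Lemma iter_par_in_VT i k v : v \in VT i -> iter k (par i) v \in VT i.
Proof. by move=> vi; elim: k => //= k; apply: par_in_VT. Qed.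

Lemma iter_par_rt i v : v \in VT i -> exists2 k, k < #|V| & iter k (par i) v = rt i.
Proof.
move=> vi; case: (btbg_rooted i) => _ _ _ /(_ v vi) [k Ek].
have vr : fconnect (par i) v (rt i) by rewrite -Ek fconnect_iter.
exists (findex (par i) v (rt i)); last exact: iter_findex.
exact: leq_trans (findex_max vr) (max_card _).
Qed.

Lemma common_vertex_leaf i j v :
  i != j -> v \in VT i -> v \in VT j -> leafb i v && leafb j v.
Proof.
case: btbgF => _ _ _ _ /[apply] -[_ common] vi vj.
by apply: common; rewrite inE vi vj.
Qed.

Lemma leaf_in_VT i v : leafb i v -> v \in VT i.
Proof. by case/and3P. Qed.

Lemma leaf_neq_rt i v : leafb i v -> v != rt i.
Proof. by case/and3P. Qed.

Lemma rt_in_VT_eq i k : rt k \in VT i -> k = i.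
Proof.
move=> rki; apply/eqP/negPn/negP => ki.
by case/andP: (common_vertex_leaf ki (rt_in_VT k) rki) => /leaf_neq_rt/eqP.
Qed.

Lemma rt_inj : injective rt.
Proof. by move=> i j Eij; apply: rt_in_VT_eq; rewrite Eij rt_in_VT. Qed.

Lemma par_neq_leaf i u v : leafb i v -> u \in VT i -> u != rt i -> par i u != v.
Proof.
case/and3P => _ _ /forallP nochild ui ur; apply/eqP => Euv.
by move: (nochild u); rewrite /childb ui ur Euv eqxx.
Qed.

Lemma isrootP v : reflect (exists k, v = rt k) (isroot F v).
Proof. by apply: (iffP existsP) => -[k /eqP]; exists k. Qed.

Lemma VT_neq_rt_not_root i v : v \in VT i -> v != rt i -> ~~ isroot F v.
Proof.
move=> vi vr; apply/negP => /isrootP[k Ev].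
by move: vi vr; rewrite Ev => /rt_in_VT_eq ->; rewrite eqxx.
Qed.

Lemma leaf_not_root i v : leafb i v -> ~~ isroot F v.
Proof. by case/and3P => vi vr _; apply: VT_neq_rt_not_root vi vr. Qed.

Lemma leaf_of_at_most_two i j k v :
  i != j -> i != k -> j != k -> leafb i v -> leafb j v -> ~~ leafb k v.
Proof.
move=> ij ik jk Li Lj; apply/negP => Lk.
case: btbgF => _ _ _ /(_ i v Li) + _.
rewrite (cardsD1 i) inE Li add1n => -[] /eqP /cards1P [x Ex].
have : j \in [set x] by rewrite -Ex !inE eq_sym ij.
have : k \in [set x] by rewrite -Ex !inE eq_sym ik.
by rewrite !inE => /eqP Ekx /eqP Ejx; rewrite Ekx Ejx eqxx in jk.
Qed.

Lemma ancP i v u :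
  reflect (exists2 k, k < #|V| & u = iter k (par i) v) (u \in anc i v).
Proof.
by apply: (iffP imsetP) => [[k _ ->]|[k kV ->]]; [exists k | exists (Ordinal kV)].
Qed.

Lemma anc_in_VT i v u : v \in VT i -> u \in anc i v -> u \in VT i.
Proof. by move=> vi /ancP[k _ ->]; apply: iter_par_in_VT. Qed.

Lemma rt_in_anc i v : v \in VT i -> rt i \in anc i v.
Proof. by case/iter_par_rt => k kV Ek; apply/ancP; exists k. Qed.

Lemma anc_refl i v : v \in anc i v.
Proof. by apply/ancP; exists 0 => //; apply/card_gt0P; exists v. Qed.

Lemma leaf_in_anc i u w : leafb i u -> w \in VT i -> u \in anc i w -> u = w.
Proof.
move=> Lu wi /ancP[[|k] _ //= Eu].
have xi := iter_par_in_VT k wi; set x := iter k (par i) w in Eu xi.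
have [xr|xr] := eqVneq x (rt i).
  by move: (leaf_neq_rt Lu); rewrite Eu xr par_rt eqxx.
by move: (par_neq_leaf Lu xi xr); rewrite Eu eqxx.
Qed.

Lemma anc_exit i v (X : {set V}) :
  v \notin X -> (exists2 x, x \in anc i v & x \in X) ->
  exists2 y, y \in anc i v & (y \notin X) && (par i y \in X).
Proof.
move=> vX [x /ancP[k kV ->] kX].
have exk : exists k, (k < #|V|) && (iter k (par i) v \in X) by exists k; rewrite kV.
case: (ex_minnP exk) => -[|l] /andP[lV lX] lmin; first by rewrite lX in vX.
exists (iter l (par i) v); first by apply/ancP; exists l => //; apply: ltnW.
rewrite lX andbT; apply/negP => lX'.
by have := lmin l; rewrite (ltnW lV) lX' ltnn => /(_ isT).
Qed.

Lemma sibb_sym i u w : sibb i u w -> sibb i w u.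
Proof.
case/and5P => ui wi ur wr /andP[uw /eqP Epar].
by rewrite /sibb ui wi ur wr eq_sym uw Epar eqxx.
Qed.

Lemma sibb_not_leaf i u w : sibb i u w -> ~~ leafb i u.
Proof.
move=> Suw; apply/negP => Lu; case: btbgF => _ ext _ _ _.
by move: (ext i u w Lu); rewrite Suw.
Qed.

Lemma sibb_internal i u w : sibb i u w -> internal F u.
Proof.
move=> Suw; have /and5P[ui _ ur _ _] := Suw.
rewrite /internal (VT_neq_rt_not_root ui ur); apply/existsP => -[k Lk].
have [ki|ki] := eqVneq k i; first by move: (sibb_not_leaf Suw); rewrite -ki Lk.
case/andP: (common_vertex_leaf ki (leaf_in_VT Lk) ui) => _ Lu.
by move: (sibb_not_leaf Suw); rewrite Lu.
Qed.

Lemma leaves_sibling_ancestors i u w : leafb i u -> leafb i w -> u != w ->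
  exists y z, [/\ y \in anc i u, z \in anc i w & sibb i y z].
Proof.
move=> Lu Lw uw; have ui := leaf_in_VT Lu; have wi := leaf_in_VT Lw.
have u_anc_w : u \notin anc i w.
  by apply/negP => /(leaf_in_anc Lu wi) /eqP; rewrite (negbTE uw).
have [y yu /andP[yw pyw]] := anc_exit u_anc_w (ex_intro2 _ _ (rt i) (rt_in_anc ui) (rt_in_anc wi)).
have yi := anc_in_VT ui yu.
have yr : y != rt i by apply: contraNneq yw => ->; apply: rt_in_anc.
have wpy : w \notin [set par i y] by rewrite inE eq_sym; apply: par_neq_leaf.
have [z zw /andP[zpy /set1P pz]] := anc_exit wpy (ex_intro2 _ _ (par i y) pyw (set11 _)).
rewrite inE in zpy.
have zr : z != rt i by apply: contraNneq zpy => zr; rewrite -pz zr par_rt.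
have yz : y != z by apply: contraNneq yw => ->.
exists y, z; split => //.
by rewrite /sibb yi (anc_in_VT wi zw) yr zr yz pz eqxx.
Qed.

Local Notation adj := (adj F).
Local Notation ell := (ell F).
Local Notation half := (Defs.half F).
Local Notation Cl := (Cl F).

Lemma adj_neq i j : adj i j -> i != j.
Proof. by case/andP. Qed.

Lemma adj_sym i j : adj i j -> adj j i.
Proof.
case/andP => ij /existsP[v /andP[Li Lj]].
by rewrite /Defs.adj eq_sym ij; apply/existsP; exists v; rewrite Li Lj.
Qed.

Lemma adj_set2 i j x y : [set i; j] = [set x; y] -> adj i j -> adj x y.
Proof.
move=> Eij Aij; have ij := adj_neq Aij.
have /set2P[] : x \in [set i; j] by rewrite Eij set21.
all: move=> Ex; subst x.
- have /set2P[Eji | <- //] : j \in [set i; y] by rewrite -Eij set22.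
  by rewrite Eji eqxx in ij.
- have /set2P[Eij' | <-] : i \in [set j; y] by rewrite -Eij set21.
    by rewrite Eij' eqxx in ij.
  exact: adj_sym.
Qed.

Lemma ell_leaf i j : adj i j -> leafb i (ell i j) && leafb j (ell i j).
Proof.
case/andP => _ /existsP[v Lv]; rewrite /Defs.ell.
by case: pickP => [u -> // | /(_ v)]; rewrite Lv.
Qed.

Lemma ell_uniq i j v : adj i j -> leafb i v -> leafb j v -> v = ell i j.
Proof.
move=> Aij Li Lj; case/andP: (ell_leaf Aij) => Li' Lj'.
case: btbgF => _ _ _ _ /(_ i j (adj_neq Aij)) [/card_le1_eqP + _].
by apply; rewrite inE !leaf_in_VT.
Qed.

Lemma ell_sym i j : adj i j -> ell i j = ell j i.
Proof.
move=> Aij; case/andP: (ell_leaf (adj_sym Aij)) => Lj Li.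
exact/esym/(ell_uniq Aij Li Lj).
Qed.

Lemma Cl_sym i j : Cl i j = Cl j i.
Proof. exact: setUC. Qed.

Lemma half_sub_Cl i j : half i j \subset Cl i j.
Proof. exact: subsetUl. Qed.

Lemma ell_in_Cl i j : ell i j \in Cl i j.
Proof. by rewrite inE anc_refl. Qed.

Lemma rt_in_half i j : adj i j -> rt i \in half i j.
Proof. by move=> /ell_leaf/andP[Li _]; apply/rt_in_anc/leaf_in_VT. Qed.

Lemma half_in_VT i j u : adj i j -> u \in half i j -> u \in VT i.
Proof. by move=> /ell_leaf/andP[Li _]; apply/anc_in_VT/leaf_in_VT. Qed.

Lemma rt_in_Cl i j k : adj i j -> (rt k \in Cl i j) = (k \in [set i; j]).
Proof.
move=> Aij; apply/idP/set2P => [|[->|->]]; rewrite ?inE.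
- case/orP => [/(half_in_VT Aij) | /(half_in_VT (adj_sym Aij))] /rt_in_VT_eq ->.
    by left.
  by right.
- by rewrite rt_in_half.
- by rewrite rt_in_half ?orbT //; apply: adj_sym.
Qed.

End TreeFamily.

Definition extension (V : finType) (S : pasg V) (A : asg V) : bool :=
  [forall v, (S v == None) || (S v == Some (A v))].

Lemma extensionP (V : finType) (S : pasg V) (A : asg V) :
  reflect (forall v, v \in Vars S -> S v = Some (A v)) (extension S A).
Proof.
apply: (iffP forallP) => [ext v | ext v].
  by rewrite inE => /negPf SvN; move: (ext v); rewrite SvN => /eqP.
have [//|SvN] := eqVneq (S v) None.
by rewrite ext ?eqxx ?orbT // inE SvN.
Qed.

Lemma extension_Some (V : finType) (S : pasg V) (A : asg V) v b :
  extension S A -> S v = Some b -> A v = b.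
Proof.
move=> /extensionP extA Sv; have : v \in Vars S by rewrite inE Sv.
by move/extA; rewrite Sv => -[].
Qed.

Lemma extension_eq (V : finType) (S : pasg V) (A B : asg V) v :
  extension S A -> extension S B -> S v != None -> A v = B v.
Proof.
move=> extA extB; case Sv: (S v) => [b|] // _.
by rewrite (extension_Some extA Sv) (extension_Some extB Sv).
Qed.

Lemma SATP (V : finType) (m : nat) (F : tree_family V m) (A : asg V) :
  reflect (forall i j, adj F i j -> satC A (Cl F i j)) (A \in SAT F).
Proof.
rewrite inE; apply: (iffP forallP) => [satA i j | satA i].
  by move/forallP/(_ j)/implyP: (satA i).
by apply/forallP => j; apply/implyP/satA.
Qed.

Section PairExtensions.
Variables (T V : finType) (D : {set T}) (f1 f2 : T -> V) (S : pasg V).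
Hypothesis f1_inj : {in D &, injective f1}.
Hypothesis f2_inj : {in D &, injective f2}.
Hypothesis f1_neq_f2 : {in D &, forall e e', f1 e != f2 e'}.
Hypothesis VarsS : Vars S = ~: (f1 @: D :|: f2 @: D).

Definition pair_values (A : asg V) : {ffun T -> bool * bool} :=
  [ffun e => if e \in D then (A (f1 e), A (f2 e)) else (false, false)].

Definition pair_extension (g : {ffun T -> bool * bool}) : asg V :=
  [ffun v => if [pick e in D | f1 e == v] is Some e then (g e).1
             else if [pick e in D | f2 e == v] is Some e then (g e).2
             else odflt false (S v)].

Lemma pair_extension_f1 g e : e \in D -> pair_extension g (f1 e) = (g e).1.
Proof.
move=> eD; rewrite ffunE; case: pickP => [e' /andP[e'D /eqP E] | /(_ e)].
  by rewrite (f1_inj e'D eD E).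
by rewrite eD eqxx.
Qed.

Lemma pair_extension_f2 g e : e \in D -> pair_extension g (f2 e) = (g e).2.
Proof.
move=> eD; rewrite ffunE; case: pickP => [e' /andP[e'D /eqP E] | _].
  by move: (f1_neq_f2 e'D eD); rewrite E eqxx.
case: pickP => [e' /andP[e'D /eqP E] | /(_ e)].
  by rewrite (f2_inj e'D eD E).
by rewrite eD eqxx.
Qed.

Lemma pair_extension_Vars g v :
  v \in Vars S -> pair_extension g v = odflt false (S v).
Proof.
rewrite VarsS !inE negb_or => /andP[v1 v2]; rewrite ffunE.
case: pickP => [e /andP[eD /eqP E] | _]; first by rewrite -E (imset_f _ eD) in v1.
case: pickP => [e /andP[eD /eqP E] | _]; first by rewrite -E (imset_f _ eD) in v2.
by [].
Qed.

Lemma card_pair_extensions (P : pred (bool * bool)) :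
  #|[set A | extension S A & [forall e in D, P (A (f1 e), A (f2 e))]]| =
  (#|P| ^ #|D|)%N.
Proof.
set X := [set A | _ & _].
have inj : {in X &, injective pair_values}.
  move=> A B; rewrite !inE => /andP[/extensionP eA _] /andP[/extensionP eB _] EAB.
  apply/ffunP => v; case: (boolP (v \in Vars S)) => vS.
    by have := eA v vS; rewrite eB // => -[].
  move: vS; rewrite VarsS inE negbK => /setUP[] /imsetP[e eD ->];
    by move/ffunP/(_ e): EAB; rewrite !ffunE eD => -[].
have img : pair_values @: X = [set g | g \in pffun_on (false, false) D P].
  apply/setP => g; rewrite inE; apply/imsetP/pfamilyP => [[A] | [/supportP g0 gP]].
    rewrite inE => /andP[_ /forall_inP AP] ->; split.
      by apply/supportP => e eD; rewrite ffunE (negbTE eD).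
    by move=> e eD; rewrite ffunE eD; apply: AP.
  exists (pair_extension g).
    rewrite inE; apply/andP; split.
      apply/extensionP => v vS; rewrite pair_extension_Vars //.
      by move: vS; rewrite inE; case: (S v).
    apply/forall_inP => e eD.
    by rewrite pair_extension_f1 // pair_extension_f2 // -surjective_pairing; apply: gP.
  apply/ffunP => e; rewrite ffunE; case: ifPn => eD; last exact: g0.
  by rewrite pair_extension_f1 // pair_extension_f2 // -surjective_pairing.
by rewrite -(card_in_imset inj) img cardsE card_pffun_on.
Qed.

End PairExtensions.

Local Open Scope ring_scope.

Lemma prob_neq0 (V : finType) (m : nat) (F : tree_family V m) (A : asg V) :
  prob F A != 0.
Proof. by rewrite expf_neq0 // invr_eq0 pnatr_eq0. Qed.

Lemma CondPr_uniform (V : finType) (m : nat) (F : tree_family V m)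
    (X Y : {set asg V}) :
  {in Y &, forall A B, prob F A = prob F B} ->
  CondPr F X Y = #|X :&: Y|%:R / #|Y|%:R.
Proof.
move=> probY; have [-> | [A0 A0Y]] := set_0Vmem Y.
  by rewrite /CondPr /Pr setI0 !big_set0 cards0 mulr0n.
have PrE (Z : {set asg V}) : Z \subset Y -> Pr F Z = prob F A0 *+ #|Z|.
  move=> /subsetP ZY; rewrite /Pr -sumr_const.
  by apply: eq_bigr => A /ZY AY; apply: probY.
rewrite /CondPr !PrE ?subsetIr // -!(mulr_natr (prob F A0)) invfM mulrACA.
by rewrite mulfV ?prob_neq0 ?mul1r.
Qed.

Section Matching.
Variables (V : finType) (m : nat) (F : tree_family V m).
Variables (M : {set {set 'I_m}}) (S : pasg V) (ph : {set 'I_m} -> 'I_m * 'I_m).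
Hypothesis btbgF : is_btbg F.
Hypothesis matchingM : pseudomatching F M.
Hypothesis VarsS : Vars S = ~: rootsM F M.
Hypothesis comfortableS : comfortable1 F M S.
Hypothesis phM : cnf_of M ph.

Local Notation rt := (rt F).
Local Notation adj := (adj F).
Local Notation ell := (ell F).
Local Notation half := (Defs.half F).
Local Notation Cl := (Cl F).
Local Notation e1 e := (ph e).1.
Local Notation e2 e := (ph e).2.

Lemma matched_adj e : e \in M -> adj (e1 e) (e2 e).
Proof.
move=> eM; case: matchingM => /(_ e eM) /existsP[i /existsP[j /andP[/eqP Ee Aij]]] _.
by apply: adj_set2 Aij; rewrite -Ee; apply: phM.
Qed.

Lemma mem_matched e k : e \in M -> (k \in e) = (k == e1 e) || (k == e2 e).
Proof. by move/phM => {1}->; rewrite !inE. Qed.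

Lemma matched_e1 e : e \in M -> e1 e \in e.
Proof. by move=> eM; rewrite mem_matched ?eqxx. Qed.

Lemma matched_e2 e : e \in M -> e2 e \in e.
Proof. by move=> eM; rewrite mem_matched ?eqxx ?orbT. Qed.

Lemma matched_rt_eq e e' k k' : e \in M -> e' \in M -> k \in e -> k' \in e' ->
  rt k = rt k' -> e = e'.
Proof.
move=> eM e'M ke k'e' /(rt_inj btbgF) Ekk'; apply/eqP/negPn/negP => ee'.
case: matchingM => _ /(_ e e' eM e'M ee') /disjointFr /(_ ke).
by rewrite Ekk' k'e'.
Qed.

Lemma matched_partner e i : e \in M -> i \in e -> exists2 c, adj i c & e = [set i; c].
Proof.
move=> eM; rewrite mem_matched // => /orP[] /eqP ->.
  by exists (e2 e); [apply: matched_adj | apply: phM].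
by exists (e1 e); [apply/adj_sym/matched_adj | rewrite setUC; apply: phM].
Qed.

Lemma rootsMP v :
  reflect (exists2 e, e \in M & exists2 k, k \in e & v = rt k) (v \in rootsM F M).
Proof.
apply: (iffP imsetP) => [[k /bigcupP[e eM ke] ->] | [e eM [k ke ->]]].
  by exists e => //; exists k.
by exists k => //; apply/bigcupP; exists e.
Qed.

Lemma rootsM_pairs :
  rootsM F M = [set rt (e1 e) | e in M] :|: [set rt (e2 e) | e in M].
Proof.
apply/setP => v; apply/rootsMP/setUP => [[e eM [k]] | [] /imsetP[e eM ->]].
- by rewrite mem_matched // => /orP[] /eqP -> ->; [left | right]; apply: imset_f.
- by exists e => //; exists (e1 e); rewrite ?matched_e1.
- by exists e => //; exists (e2 e); rewrite ?matched_e2.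
Qed.

Lemma mem_rootsM v : (v \in rootsM F M) = (S v == None).
Proof. by rewrite -[_ \in _]negbK -in_setC -VarsS inE negbK. Qed.

Lemma matched_clause_false e i c u : e \in M -> e = [set i; c] ->
  u \in Cl i c -> ~~ isroot F u -> S u = Some false.
Proof.
move=> eM Ee uC ur.
case: comfortableS => _ /(_ e i c eM Ee) /andP[/forall_inP/(_ u uC)].
by rewrite ur => /eqP.
Qed.

Lemma matched_clause_sibling_true e i c u w : e \in M -> e = [set i; c] ->
  u \in Cl i c -> internal F u -> siblings F u w -> S w = Some true.
Proof.
move=> eM Ee uC uint uw.
case: comfortableS => _ /(_ e i c eM Ee) /andP[_ /forall_inP/(_ u uC)].
by rewrite uint => /forallP/(_ w); rewrite uw => /eqP.
Qed.

(* The paths from t_i to its leaves shared with T_c and T_j split at an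
   internal vertex; the child toward ell i c lies on C_{i,c}, so its
   sibling toward ell i j is set true by S. *)
Lemma matched_true_toward_other e i c j : e \in M -> e = [set i; c] ->
  adj i c -> adj i j -> c != j ->
  exists2 y, y \in Cl i j & ~~ leafb F i y && (S y == Some true).
Proof.
move=> eM Ee Aic Aij cj.
case/andP: (ell_leaf Aij) => Lij Lji; case/andP: (ell_leaf Aic) => Lic Lci.
have ell_neq : ell i j != ell i c.
  apply: contraTneq Lci => Eell; rewrite Eell in Lji.
  by apply: (leaf_of_at_most_two btbgF (adj_neq Aij) (adj_neq Aic) _ Lic Lji); rewrite eq_sym.
have [y [z [yj zc Syz]]] := leaves_sibling_ancestors btbgF Lij Lic ell_neq.
exists y; first by rewrite inE yj.
rewrite (sibb_not_leaf btbgF Syz) /=; apply/eqP.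
apply: (matched_clause_sibling_true eM Ee (u := z)).
- by rewrite inE zc.
- exact/(sibb_internal btbgF)/sibb_sym/Syz.
- by apply/existsP; exists i; apply: sibb_sym.
Qed.

Lemma matched_side_sat A i j e : extension S A ->
  {in M, forall e, A (rt (e1 e)) || A (rt (e2 e))} ->
  adj i j -> e \in M -> i \in e -> satC A (Cl i j).
Proof.
move=> extA pairsA Aij eM ie; have [c Aic Ee] := matched_partner eM ie.
have [Ecj | cj] := eqVneq c j.
  subst c; apply/existsP; case/orP: (pairsA e eM) => Ae;
    [exists (rt (e1 e)) | exists (rt (e2 e))];
    by rewrite Ae andbT (rt_in_Cl btbgF) // -Ee mem_matched ?eqxx ?orbT.
have [y yC /andP[_ /eqP Sy]] := matched_true_toward_other eM Ee Aic Aij cj.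
by apply/existsP; exists y; rewrite yC (extension_Some extA Sy).
Qed.

Lemma extension_SAT A : extension S A ->
  {in M, forall e, A (rt (e1 e)) || A (rt (e2 e))} -> A \in SAT F.
Proof.
move=> extA pairsA; apply/SATP => i j Aij.
have [/exists_inP[e eM ie] | ni] := boolP [exists e in M, i \in e].
  exact: matched_side_sat ie.
have [/exists_inP[e eM je] | nj] := boolP [exists e in M, j \in e].
  by rewrite Cl_sym; apply: matched_side_sat (adj_sym Aij) eM je.
case: comfortableS => /(_ i j Aij); rewrite negb_forall_in => /exists_inP[u uC Su] _.
have Su_def : S u != None.
  rewrite -mem_rootsM; apply/rootsMP => -[e eM [k ke Eu]].
  move: uC; rewrite Eu (rt_in_Cl btbgF) // => /set2P[] Ek; subst k.
  - by move/exists_inP: ni; apply; exists e.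
  - by move/exists_inP: nj; apply; exists e.
apply/existsP; exists u; rewrite uC /=.
move: Su Su_def; case Eu: (S u) => [b|] // Sf _.
by rewrite (extension_Some extA Eu); case: b Sf {Eu}.
Qed.

Lemma EC_matched A : (A \in EC F S) =
  extension S A && [forall e in M, A (rt (e1 e)) || A (rt (e2 e))].
Proof.
rewrite inE; apply/andP/andP => [[satA extA] | [extA /forall_inP pairsA]].
  split=> //; apply/forall_inP => e eM; have Aee := matched_adj eM.
  move/SATP/(_ _ _ Aee)/existsP: satA => -[u /andP[uC Au]].
  have [/isrootP[k Eu] | ur] := boolP (isroot F u).
    by move: uC Au; rewrite Eu (rt_in_Cl btbgF) // => /set2P[] -> ->; rewrite ?orbT.
  by rewrite (extension_Some extA (matched_clause_false eM (phM eM) uC ur)) in Au.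
by split=> //; apply: extension_SAT.
Qed.

Lemma matched_half_sat A e : extension S A -> e \in M ->
  satC A (half (e1 e) (e2 e)) = A (rt (e1 e)).
Proof.
move=> extA eM; have Aee := matched_adj eM.
apply/existsP/idP => [[u /andP[uh Au]] | Ar]; last first.
  by exists (rt (e1 e)); rewrite Ar (rt_in_half btbgF).
have [/isrootP[k Eu] | ur] := boolP (isroot F u).
  by move: uh Au; rewrite Eu => /(half_in_VT btbgF Aee) /(rt_in_VT_eq btbgF) ->.
have uC := subsetP (half_sub_Cl F _ _) _ uh.
by rewrite (extension_Some extA (matched_clause_false eM (phM eM) uC ur)) in Au.
Qed.

Lemma ESEC_matched A :
  (A \in ES F M ph :&: EC F S) = extension S A && [forall e in M, A (rt (e1 e))].
Proof.
rewrite inE EC_matched [A \in ES F M ph]inE.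
have [extA | _] /= := boolP (extension S A); last by rewrite andbF.
apply/idP/forall_inP => [/andP[/andP[_ /forall_inP halfA] _] e eM | rootsA].
  by rewrite -matched_half_sat // halfA.
have pairsA : {in M, forall e, A (rt (e1 e)) || A (rt (e2 e))}.
  by move=> e eM; rewrite rootsA.
rewrite extension_SAT //=; apply/andP; split; apply/forall_inP => e eM; last exact: pairsA.
by rewrite matched_half_sat // rootsA.
Qed.

Lemma fixed_clause_unmatched A i j e : extension S A -> adj i j -> A (ell i j) ->
  {in Cl i j, forall u, u != ell i j -> ~~ A u} -> e \in M -> i \notin e.
Proof.
move=> extA Aij Aell others eM; apply/negP => ie.
have [c Aic Ee] := matched_partner eM ie.
have [Ecj | cj] := eqVneq c j.
  subst c; case/andP: (ell_leaf Aij) => /(leaf_not_root btbgF) ellr _.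
  have Sell := matched_clause_false eM Ee (ell_in_Cl F i j) ellr.
  by rewrite (extension_Some extA Sell) in Aell.
have [y yC /andP[yleaf /eqP Sy]] := matched_true_toward_other eM Ee Aic Aij cj.
have yell : y != ell i j.
  by apply: contraNneq yleaf => ->; case/andP: (ell_leaf Aij).
by move: (others y yC yell); rewrite (extension_Some extA Sy).
Qed.

Lemma fixed_clause_assigned A i j u : extension S A -> adj i j -> A (ell i j) ->
  {in Cl i j, forall u, u != ell i j -> ~~ A u} -> u \in Cl i j -> S u != None.
Proof.
move=> extA Aij Aell others uC; rewrite -mem_rootsM; apply/rootsMP => -[e eM [k ke Eu]].
move: uC; rewrite Eu (rt_in_Cl btbgF) // => /set2P[] Ek; subst k.
  exact: negP (fixed_clause_unmatched extA Aij Aell others eM) ke.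
have Aji := adj_sym Aij; rewrite (ell_sym btbgF Aij) in Aell others.
by rewrite Cl_sym in others; apply: negP (fixed_clause_unmatched extA Aji Aell others eM) ke.
Qed.

Lemma Fix_EC_sub A B : A \in EC F S -> B \in EC F S -> Fix F A \subset Fix F B.
Proof.
rewrite !inE => /andP[_ extA] /andP[_ extB]; apply/subsetP => v; rewrite !inE.
case/existsP => i /existsP[j /and4P[Aij /eqP-> Aell /forall_inP othersA]].
have others : {in Cl i j, forall u, u != ell i j -> ~~ A u}.
  by move=> u uC; apply/implyP/othersA.
have AB u : u \in Cl i j -> A u = B u.
  by move=> uC; apply/extension_eq/(fixed_clause_assigned extA Aij Aell others uC).
apply/existsP; exists i; apply/existsP; exists j.
rewrite Aij eqxx -AB ?ell_in_Cl // Aell /=.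
by apply/forall_inP => u uC; rewrite -AB //; apply: othersA.
Qed.

Lemma Fix_EC_eq A B : A \in EC F S -> B \in EC F S -> Fix F A = Fix F B.
Proof. by move=> ECA ECB; apply/eqP; rewrite eqEsubset !Fix_EC_sub. Qed.

Lemma matched_root_inj (sel : 'I_m * 'I_m -> 'I_m) :
  (forall e, e \in M -> sel (ph e) \in e) -> {in M &, injective (fun e => rt (sel (ph e)))}.
Proof. by move=> selM e e' eM e'M; apply: matched_rt_eq (selM e eM) (selM e' e'M). Qed.

Lemma matched_roots_neq : {in M &, forall e e', rt (e1 e) != rt (e2 e')}.
Proof.
move=> e e' eM e'M; apply/eqP => E.
have Ee := matched_rt_eq eM e'M (matched_e1 eM) (matched_e2 e'M) E; subst e'.
by move: (adj_neq (matched_adj eM)); rewrite (rt_inj btbgF E) eqxx.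
Qed.

Lemma card_EC_pairs (P : pred (bool * bool)) :
  #|[set A | extension S A & [forall e in M, P (A (rt (e1 e)), A (rt (e2 e)))]]| =
  (#|P| ^ #|M|)%N.
Proof.
apply: card_pair_extensions.
- exact: (matched_root_inj matched_e1).
- exact: (matched_root_inj matched_e2).
- exact: matched_roots_neq.
- by rewrite VarsS rootsM_pairs.
Qed.

Lemma card_EC : #|EC F S| = (3 ^ #|M|)%N.
Proof.
have card3 : #|[pred p : bool * bool | p.1 || p.2]| = 3%N.
  by rewrite (eq_card (_ : _ =i predC1 (false, false))) ?cardC1 ?card_prod ?card_bool // => -[[] []].
rewrite -card3 -card_EC_pairs; apply: eq_card => A.
by rewrite EC_matched inE.
Qed.

Lemma card_ESEC : #|ES F M ph :&: EC F S| = (2 ^ #|M|)%N.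
Proof.
have card2 : #|[pred p : bool * bool | p.1]| = 2%N.
  by rewrite (eq_card (_ : _ =i [:: (true, true); (true, false)])) ?(card_uniqP _) // => -[[] []].
rewrite -card2 -card_EC_pairs; apply: eq_card => A.
by rewrite ESEC_matched inE.
Qed.

End Matching.

Theorem lemma13 (V : finType) (m : nat) (F : tree_family V m)
  (M : {set {set 'I_m}}) (S : pasg V) (ph : {set 'I_m} -> 'I_m * 'I_m) :
  is_btbg F -> pseudomatching F M ->
  Vars S = ~: rootsM F M -> comfortable1 F M S ->
  cnf_of M ph ->
  CondPr F (ES F M ph) (EC F S) = (2%:R / 3%:R : rat) ^+ #|M|.
Proof.
move=> btbgF matchingM VarsS comfortableS phM.
rewrite CondPr_uniform; last first.
  by move=> A B ECA ECB; rewrite /prob (Fix_EC_eq btbgF matchingM VarsS comfortableS phM ECA ECB).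
by rewrite (card_ESEC btbgF matchingM VarsS comfortableS phM)
  (card_EC btbgF matchingM VarsS comfortableS phM) !natrX expr_div_n.
Qed.
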